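(* In the setting described in the context (a $k$-player $\alpha$-anchored game, a deterministic strategy for $G^n$, $C=\{m+1,\dots,n\}$, and the random variables $X,Y,Z,\Omega$, event $W$ and quantity $\delta$ defined there), the following hold: (i) $\mathbb{E}_{i\in[m]}\|\mathsf{P}_{X_iY_i\Omega_i|W}-\mathsf{P}_{X_iY_i\Omega_i}\|\le\sqrt{\delta}$; (ii) $\mathbb{E}_{i\in[m]}\|\mathsf{P}_{X_iY_iZ\Omega_{-i}|W}-\mathsf{P}_{X_i|Y_i}\mathsf{P}_{Y_iZ\Omega_{-i}|W}\|\le\sqrt{\delta}$; (iii) $\mathbb{E}_{i\in[m]}\|\mathsf{P}_{Y_iZ\Omega|W}-\mathsf{P}_{Y_i|\Omega_i}\mathsf{P}_{Z\Omega|W}\|\le\sqrt{\delta}$.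
   Context: Let $G=(\mathcal{X},\mathcal{A},\mu,V)$ be a $k$-player game: $\mathcal{X}=\mathcal{X}^1\times\cdots\times\mathcal{X}^k$, $\mathcal{A}=\mathcal{A}^1\times\cdots\times\mathcal{A}^k$ finite, $\mu$ a distribution on $\mathcal{X}$, $V:\mathcal{X}\times\mathcal{A}\to\{0,1\}$. Assume $G$ is $\alpha$-anchored with anchor sets $\mathcal{X}^t_\perp\subseteq\mathcal{X}^t$: the marginal probability that $x^t\in\mathcal{X}^t_\perp$ is at least $\alpha$ for each $t$, and $\mu(x)=\mu(x|_{\overline{F}_x})\prod_{t\in F_x}\mu(x^t)$ for all $x$, where $F_x=\{t:x^t\in\mathcal{X}^t_\perp\}$, $\overline F_x=[k]\setminus F_x$ and $\mu(x|_S)$, $\mu(x^t)$ are marginals. Fix $n$, integers $1\le m<n$, $C=\{m+1,\dots,n\}$, and a deterministic strategy for $G^n$, i.e. functions $f^t:(\mathcal{X}^t)^n\to(\mathcal{A}^t)^n$. Let $X=(X_1,\dots,X_n)$ with $X_i=(X_i^1,\dots,X_i^k)$ be distributed as $\mu^{\otimes n}$, let $(A_1^t,\dots,A_n^t)=f^t(X_1^t,\dots,X_n^t)$, $A_i=(A_i^1,\dots,A_i^k)$, and $Z=(A_j)_{j\in C}$. Let $W$ be the event that $V(X_j,A_j)=1$ for all $j\in C$, assume $\Pr(W)>0$, and set $\delta=\frac{|C|\log|\mathcal{A}|+\log(1/\Pr(W))}{m}$. For each $i,t$ let $Y_i^t=X_i^t$ if $X_i^t\notin\mathcal{X}^t_\perp$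 and $Y_i^t=\perp$ otherwise; $Y_i=(Y_i^1,\dots,Y_i^k)$; $Y_i^{-t}$ is $Y_i$ with coordinate $t$ omitted and $Y_i^S=(Y_i^t)_{t\in S}$. For $i\in[m]$ let $D_i$ be a uniformly random subset of $[k]$ of size $k-1$, the $D_i$ independent of each other and of $X$; let $M_i=Y_i^{D_i}$ and $\Omega_i=(D_i,M_i)$; for $j\in C$ let $\Omega_j=X_j$. Let $\Omega=(\Omega_1,\dots,\Omega_n)$ and $\Omega_{-i}$ be $\Omega$ with $\Omega_i$ omitted. Notation: $\mathsf{P}_U$ is the distribution of $U$, $\mathsf{P}_{U|W}$ and $\mathsf{P}_{U|T}$ denote conditional distributions; a product such as $\mathsf{P}_{U}\mathsf{P}_{T|U'}$ denotes the joint distribution $(u,t)\mapsto\mathsf{P}_U(u)\mathsf{P}_{T|U'=u'}(t)$ where $u'$ is the part of $u$ corresponding to $U'$ (e.g. $\mathsf{P}_{X_i|Y_i}\mathsf{P}_{Y_iZ\Omega_{-i}|W}$ is $(x,y,z,\omega)\mapsto\mathsf{P}_{Y_iZ\Omega_{-i}|W}(y,z,\omega)\mathsf{P}_{X_i|Y_i=y}(x)$). $\|\cdot\|$ is total variation distance, and $\mathbb{E}_{i\in[m]}$ is the uniform average over $i\in[m]$. *)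

From HB Require Import structures.
From mathcomp Require Import all_boot all_order all_algebra.
From mathcomp Require Import reals exp.
Set Implicit Arguments. Unset Strict Implicit. Unset Printing Implicit Defensive.
Import Order.TTheory GRing.Theory Num.Theory.
Local Open Scope ring_scope.

Section Prob.
Variables (R : realType) (S : finType) (P : S -> R).

Definition Pr (E : pred S) : R := \sum_(s | E s) P s.

Definition distr_of (T : finType) (U : S -> T) : T -> R :=
  fun u => Pr (fun s => U s == u).

Definition cond_distr (T : finType) (U : S -> T) (E : pred S) : T -> R :=
  fun u => Pr (fun s => (U s == u) && E s) / Pr E.

(* conditional distribution P_{U1 | U2 = y}(x)  (0 if Pr(U2 = y) = 0) *)
Definition cond_kernel (T1 T2 : finType) (U1 : S -> T1) (U2 : S -> T2)
  : T2 -> T1 -> R :=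
  fun y x => Pr (fun s => (U1 s == x) && (U2 s == y)) / Pr (fun s => U2 s == y).
End Prob.

Definition tv (R : realType) (T : finType) (p q : T -> R) : R :=
  2^-1 * \sum_(t : T) `|p t - q t|.

Definition log2 (R : realType) (x : R) : R := ln x / ln 2.

Section Game.
Variables (R : realType) (k : nat) (Xs As : 'I_k -> finType).

Definition QX := {dffun forall t : 'I_k, Xs t}.
Definition AX := {dffun forall t : 'I_k, As t}.

Definition is_distr (mu : QX -> R) :=
  (forall x, 0 <= mu x) /\ \sum_(x : QX) mu x = 1.

Definition marg (mu : QX -> R) (Sp : {set 'I_k}) (x : QX) : R :=
  \sum_(x' : QX | [forall t in Sp, x' t == x t]) mu x'.

Definition marg1 (mu : QX -> R) (t : 'I_k) (a : Xs t) : R :=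
  \sum_(x' : QX | x' t == a) mu x'.

Definition anchor_players (anc : forall t, {set Xs t}) (x : QX) : {set 'I_k} :=
  [set t | x t \in anc t].

Definition anchored (mu : QX -> R) (alpha : R) (anc : forall t, {set Xs t}) :=
  (forall t, alpha <= \sum_(x : QX | x t \in anc t) mu x) /\
  (forall x : QX, mu x = marg mu (~: anchor_players anc x) x *
                          \prod_(t in anchor_players anc x) marg1 mu (x t)).

Variable n : nat.

(* outcome = (X_1..X_n, D_1..D_n); the D_i for i outside [m] are unused *)
Definition Sp := ({ffun 'I_n -> QX} * {ffun 'I_n -> {set 'I_k}})%type.

Definition sampleP (mu : QX -> R) (w : Sp) : R :=
  (\prod_(i < n) mu (w.1 i)) *
  \prod_(i < n) ((#|w.2 i| == k.-1)%:R /
                 #|[set D : {set 'I_k} | #|D| == k.-1]|%:R).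

Variables (anc : forall t, {set Xs t})
          (f : forall t, {ffun 'I_n -> Xs t} -> {ffun 'I_n -> As t})
          (m : nat).

Definition YT := {dffun forall t : 'I_k, option (Xs t)}.
Definition MT := {dffun forall t : 'I_k, option (option (Xs t))}.
(* Omega_i : either (D_i, M_i) (i in [m]) or X_j (j in C) *)
Definition OT := (({set 'I_k} * MT) + QX)%type.

Definition Xv (i : 'I_n) (w : Sp) : QX := w.1 i.

(* Y_i^t = X_i^t if not anchor, None (= ⊥) otherwise *)
Definition Yv (i : 'I_n) (w : Sp) : YT :=
  @finfun _ (fun t => option (Xs t))
    (fun t => if (w.1 i) t \in anc t then None else Some ((w.1 i) t)).

Definition Av (i : 'I_n) (w : Sp) : AX :=
  @finfun _ (fun t => As t) (fun t => @f t [ffun j => (w.1 j) t] i).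

(* Z = (A_j)_{j in C}, C = {j | m <= j} (0-based indices) *)
Definition Zv (w : Sp) : {ffun 'I_n -> option AX} :=
  [ffun j : 'I_n => if (m <= j)%N then Some (Av j w) else None].

(* M_i = Y_i^{D_i} : coordinates in D_i, None marks coordinates outside D_i *)
Definition Mv (i : 'I_n) (w : Sp) : MT :=
  @finfun _ (fun t => option (option (Xs t)))
    (fun t => if t \in w.2 i then Some (Yv i w t) else None).

Definition Omv (i : 'I_n) (w : Sp) : OT :=
  if (i < m)%N then inl (w.2 i, Mv i w) else inr (w.1 i).

Definition Omall (w : Sp) : {ffun 'I_n -> OT} := [ffun j => Omv j w].

(* Omega_{-i}: None marks the omitted coordinate *)
Definition Omminus (i : 'I_n) (w : Sp) : {ffun 'I_n -> option OT} :=
  [ffun j => if j == i then None else Some (Omv j w)].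

Definition Wev (V : QX -> AX -> bool) : pred Sp :=
  fun w => [forall j : 'I_n, (m <= j)%N ==> V (w.1 j) (Av j w)].

Definition avg_m (F : 'I_n -> R) : R := m%:R^-1 * \sum_(i < n | (i < m)%N) F i.

End Game.

From HB Require Import structures.
From mathcomp Require Import all_boot all_order all_algebra.
From mathcomp Require Import reals exp.
From mathcomp Require Import ring lra.
Set Implicit Arguments. Unset Strict Implicit. Unset Printing Implicit Defensive.
Import Order.TTheory GRing.Theory Num.Theory.
Local Open Scope ring_scope.

(* Under P(. | W) the n coordinates are at relative entropy at most
   log 1/P(W) + |C| log |A| = m delta (in bits) from a law under which they are
   conditionally independent given the advice (Y_i, Omega_i): conditioning on W
   inflates probabilities by at most 1/P(W), and the revealed answers Z take at most
   |A|^|C| values.  By the chain rule and Gibbs' inequality this bound splits into a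
   sum over i of the divergences of X_i Y_i Omega_i, of Y_i given Omega_i, and of X_i
   given Y_i; for the last one, conditioning on the finer (Z, Y, Omega) only increases
   the divergence, and given (Y_i, Omega_i) the question X_i has the same law as given
   Y_i since D_i is independent of X_i.  Finally tv^2 <= D (through the Hellinger
   distance) and Cauchy-Schwarz over i in [m] give the average bound sqrt delta. *)

Lemma ffun_eqE (I : finType) (T : eqType) (F G : I -> T) :
  ([ffun i => F i] == [ffun i => G i]) = [forall i, F i == G i].
Proof.
apply/eqP/forallP => [/ffunP eqFG i | eqFG].
  by have := eqFG i; rewrite !ffunE => ->.
by apply/ffunP => i; rewrite !ffunE; apply/eqP.
Qed.

Lemma forall_andE (I : finType) (a b : pred I) :
  [forall i, a i && b i] = [forall i, a i] && [forall i, b i].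
Proof.
apply/forallP/andP => [ab | [/forallP ha /forallP hb] i]; last by rewrite ha hb.
by split; apply/forallP => i; have /andP[] := ab i.
Qed.

Section RealFacts.
Variable R : realType.

Lemma ln_le_subr1 (x : R) : 0 < x -> ln x <= x - 1.
Proof.
by move=> x0; have := @le_ln1Dx R (x - 1); rewrite [1 + _]addrC subrK; apply; lra.
Qed.

Lemma ln_prod (I : finType) (P : pred I) (F : I -> R) :
  (forall i, P i -> 0 < F i) -> ln (\prod_(i | P i) F i) = \sum_(i | P i) ln (F i).
Proof.
move=> F_gt0.
suff [-> _] : \sum_(i | P i) ln (F i) = ln (\prod_(i | P i) F i) /\
              0 < \prod_(i | P i) F i by [].
apply: (big_rec2 (fun s q => s = ln q /\ 0 < q)); first by rewrite ln1.
move=> i s q Pi [-> q_gt0]; split; last by rewrite mulr_gt0 ?F_gt0.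
by rewrite lnM // posrE F_gt0.
Qed.

Lemma ln_divM (x y z : R) : 0 < x -> 0 < y -> 0 < z ->
  ln (x / (y * z)) = ln x - ln y - ln z.
Proof.
move=> x0 y0 z0.
by rewrite ln_div ?lnM ?posrE ?mulr_gt0 // opprD addrA.
Qed.

Lemma ln_chain (I : finType) (e g : R) (d k : I -> R) :
  0 < e -> 0 < g -> (forall i, 0 < d i) -> (forall i, 0 < k i) ->
  \sum_i ln (d i / (g * k i)) + ln (e / (g * \prod_i (d i / g))) =
  ln (e / (g * \prod_i k i)).
Proof.
move=> e0 g0 d0 k0.
have dg0 i : 0 < d i / g by rewrite divr_gt0.
rewrite !ln_divM ?prodr_gt0 // !ln_prod //.
under eq_bigr do rewrite ln_divM //.
under [X in _ - X]eq_bigr do rewrite ln_div ?posrE //.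
by rewrite !sumrB; lra.
Qed.

Lemma cauchy_schwarz (I : finType) (P : pred I) (x y : I -> R) :
  (\sum_(i | P i) x i * y i) ^+ 2 <=
  (\sum_(i | P i) x i ^+ 2) * (\sum_(i | P i) y i ^+ 2).
Proof.
rewrite expr2 mulr_suml; under eq_bigr do rewrite mulr_sumr.
rewrite mulr_suml; under [X in _ <= X]eq_bigr do rewrite mulr_sumr.
set RR := \sum_(i | P i) \sum_(j | P j) x i ^+ 2 * y j ^+ 2.
have RRE : RR = \sum_(i | P i) \sum_(j | P j) (x j ^+ 2 * y i ^+ 2).
  by rewrite /RR exchange_big.
(* 2 x_i y_i x_j y_j <= x_i^2 y_j^2 + x_j^2 y_i^2, summed over (i, j) *)
apply: (@le_trans _ _ ((\sum_(i | P i) \sum_(j | P j)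
                         (x i ^+ 2 * y j ^+ 2 + x j ^+ 2 * y i ^+ 2)) / 2)).
  rewrite ler_pdivlMr // mulr_suml; apply: ler_sum => i _.
  rewrite mulr_suml; apply: ler_sum => j _.
  have := sqr_ge0 (x i * y j - x j * y i); nra.
under eq_bigr do rewrite big_split /=.
by rewrite big_split /= -RRE -/RR ler_pdivrMr //; lra.
Qed.

Lemma tv_sqr_le_hellinger (T : finType) (a q : T -> R) :
  (forall t, 0 <= a t) -> \sum_t a t = 1 ->
  (forall t, 0 <= q t) -> \sum_t q t <= 1 ->
  tv a q ^+ 2 <= 2 - 2 * \sum_t Num.sqrt (a t * q t).
Proof.
move=> a0 a1 q0 q1.
pose sa t := Num.sqrt (a t); pose sq t := Num.sqrt (q t).
set BC := \sum_t _.
have saq t : sa t * sq t = Num.sqrt (a t * q t) by rewrite sqrtrM.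
have normB t : `|a t - q t| = `|sa t - sq t| * (sa t + sq t).
  rewrite -{1}(sqr_sqrtr (a0 t)) -{1}(sqr_sqrtr (q0 t)) subr_sqr normrM.
  by rewrite (@ger0_norm _ (sa t + sq t)) // addr_ge0 ?sqrtr_ge0.
have sum_sqrB : \sum_t `|sa t - sq t| ^+ 2 = 1 + \sum_t q t - 2 * BC.
  rewrite (eq_bigr (fun t => a t + q t - 2 * Num.sqrt (a t * q t))) => [|t _].
    by rewrite sumrB big_split /= a1 -mulr_sumr.
  rewrite real_normK ?num_real // sqrrB -saq /sa /sq !sqr_sqrtr //.
  by rewrite -mulr_natl; lra.
have sum_sqrD : \sum_t (sa t + sq t) ^+ 2 = 1 + \sum_t q t + 2 * BC.
  rewrite (eq_bigr (fun t => a t + q t + 2 * Num.sqrt (a t * q t))) => [|t _].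
    by rewrite !big_split /= a1 -mulr_sumr.
  by rewrite sqrrD -saq /sa /sq !sqr_sqrtr // -mulr_natl; lra.
(* Cauchy-Schwarz gives 4 tv^2 <= (1 + Q)^2 - 4 BC^2 with Q = \sum q <= 1, BC <= 1. *)
have := cauchy_schwarz xpredT (fun t => `|sa t - sq t|) (fun t => sa t + sq t).
rewrite sum_sqrB sum_sqrD /tv (eq_bigr _ (fun t _ => normB t)) => CS.
have BC0 : 0 <= BC by apply: sumr_ge0 => t _; apply: sqrtr_ge0.
have Q0 : 0 <= \sum_t q t by apply: sumr_ge0.
have H0 : 0 <= 1 + \sum_t q t - 2 * BC by rewrite -sum_sqrB sumr_ge0 // => t _; apply: sqr_ge0.
have h1 : 0 <= (1 - \sum_t q t) * (1 + \sum_t q t + 2 * BC) by apply: mulr_ge0; lra.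
have h2 : 0 <= (1 + \sum_t q t - 2 * BC) * (1 - BC) by apply: mulr_ge0; lra.
rewrite exprMn; nra.
Qed.

End RealFacts.

Lemma eq_tv (R : realType) (T : finType) (p1 p2 q1 q2 : T -> R) :
  p1 =1 p2 -> q1 =1 q2 -> tv p1 q1 = tv p2 q2.
Proof. by move=> ep eq; rewrite /tv; congr (_ * _); apply: eq_bigr => t _; rewrite ep eq. Qed.

Lemma tv_ge0 (R : realType) (T : finType) (p q : T -> R) : 0 <= tv p q.
Proof. by rewrite /tv mulr_ge0 ?invr_ge0 ?ler0n // sumr_ge0. Qed.

(** * Relative entropy on a finite probability space *)

Section FiniteProbability.
Variables (R : realType) (S : finType) (p : S -> R).
Hypothesis p_ge0 : forall s, 0 <= p s.
Hypothesis p_sum1 : \sum_s p s = 1.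

Definition Ex (F : S -> R) : R := \sum_s p s * F s.

Lemma Pr_ge0 (E : pred S) : 0 <= Pr p E.
Proof. exact: sumr_ge0. Qed.

Lemma eq_Pr (E1 E2 : pred S) : E1 =1 E2 -> Pr p E1 = Pr p E2.
Proof. exact: eq_bigl. Qed.

Lemma le_Pr (E1 E2 : pred S) : (forall s, E1 s -> E2 s) -> Pr p E1 <= Pr p E2.
Proof.
move=> sub12; rewrite /Pr [X in _ <= X]big_mkcond [X in X <= _]big_mkcond.
apply: ler_sum => s _; case E1s: (E1 s); first by rewrite sub12.
by case: (E2 s).
Qed.

Lemma Pr_ge_pt (E : pred S) w : E w -> p w <= Pr p E.
Proof. by move=> Ew; rewrite /Pr (bigD1 w) //= lerDl sumr_ge0. Qed.

Lemma Pr_gt0 (E : pred S) w : 0 < p w -> E w -> 0 < Pr p E.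
Proof. by move=> pw Ew; apply: lt_le_trans (Pr_ge_pt Ew). Qed.

Lemma Pr_fiber_gt0 (T : eqType) (V : S -> T) w : 0 < p w -> 0 < Pr p (fun s => V s == V w).
Proof. by move=> pw; apply: Pr_gt0 pw _. Qed.

Lemma distr_of_pair (T1 T2 : finType) (U1 : S -> T1) (U2 : S -> T2) x y :
  distr_of p (fun s => (U1 s, U2 s)) (x, y) = Pr p (fun s => (U1 s == x) && (U2 s == y)).
Proof. by apply: eq_bigl => s; rewrite xpair_eqE. Qed.

Lemma sum_Pr_fiber_and (T : finType) (V : S -> T) (E : pred S) :
  \sum_t Pr p (fun s => (V s == t) && E s) = Pr p E.
Proof.
rewrite /Pr [RHS](partition_big V xpredT) //=; apply: eq_bigr => t _.
by apply: eq_bigl => s; rewrite andbC.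
Qed.

Lemma sum_distr_of (T : finType) (V : S -> T) : \sum_t distr_of p V t = 1.
Proof.
rewrite -p_sum1 -[\sum_s p s](sum_Pr_fiber_and V xpredT).
by apply: eq_bigr => t _; apply: eq_bigl => s; rewrite andbT.
Qed.

Lemma cond_kernel_ge0 (T1 T2 : finType) (U1 : S -> T1) (U2 : S -> T2) y x :
  0 <= cond_kernel p U1 U2 y x.
Proof. by rewrite /cond_kernel divr_ge0 ?Pr_ge0. Qed.

Lemma sum_cond_kernel_le1 (T1 T2 : finType) (U1 : S -> T1) (U2 : S -> T2) y :
  \sum_x cond_kernel p U1 U2 y x <= 1.
Proof.
rewrite /cond_kernel -mulr_suml sum_Pr_fiber_and.
by have [->|nz] := eqVneq (Pr p (fun s => U2 s == y)) 0; rewrite ?mul0r ?divff.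
Qed.

Lemma cond_kernel_gt0 (T1 T2 : finType) (U1 : S -> T1) (U2 : S -> T2) w :
  0 < p w -> 0 < cond_kernel p U1 U2 (U2 w) (U1 w).
Proof. by move=> pw; rewrite /cond_kernel divr_gt0 // (Pr_gt0 pw) ?eqxx. Qed.

Lemma exists_supp : exists w, 0 < p w.
Proof.
apply/existsP; apply: contraT => /existsPn p_le0.
suff : \sum_s p s <= 0 by rewrite p_sum1 ler10.
by apply: sumr_le0 => s _; rewrite leNgt p_le0.
Qed.

Lemma Ex_le_supp (F G : S -> R) : (forall w, 0 < p w -> F w <= G w) -> Ex F <= Ex G.
Proof.
move=> FG; apply: ler_sum => w _.
have [<-|pw] := eqVneq 0 (p w); first by rewrite !mul0r.
by rewrite ler_wpM2l //; apply: FG; rewrite lt_def eq_sym pw p_ge0.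
Qed.

Lemma Ex_eq_supp (F G : S -> R) : (forall w, 0 < p w -> F w = G w) -> Ex F = Ex G.
Proof. by move=> FG; apply/le_anti; rewrite !Ex_le_supp // => w /FG ->. Qed.

Lemma ExD (F G : S -> R) : Ex (fun w => F w + G w) = Ex F + Ex G.
Proof. by rewrite /Ex -big_split; apply: eq_bigr => w _; rewrite mulrDr. Qed.

Lemma ExB (F G : S -> R) : Ex (fun w => F w - G w) = Ex F - Ex G.
Proof. by rewrite /Ex -sumrB; apply: eq_bigr => w _; rewrite mulrBr. Qed.

Lemma ExC (c : R) : Ex (fun _ => c) = c.
Proof. by rewrite /Ex -mulr_suml p_sum1 mul1r. Qed.

Lemma Ex_sum (I : finType) (J : pred I) (F : I -> S -> R) :
  Ex (fun w => \sum_(i | J i) F i w) = \sum_(i | J i) Ex (F i).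
Proof. by rewrite /Ex; under eq_bigr do rewrite mulr_sumr; rewrite exchange_big. Qed.

Lemma Ex_fiber (T : finType) (V : S -> T) (h : T -> R) :
  Ex (fun w => h (V w)) = \sum_t distr_of p V t * h t.
Proof.
rewrite /Ex (partition_big V xpredT) //=; apply: eq_bigr => t _.
by rewrite /distr_of /Pr mulr_suml; apply: eq_bigr => s /eqP ->.
Qed.

Definition relent (T : finType) (V : S -> T) (q : T -> R) : R :=
  Ex (fun w => ln (distr_of p V (V w) / q (V w))).

Section Divergence.
Variables (T : finType) (V : S -> T) (q : T -> R).
Hypothesis q_ge0 : forall t, 0 <= q t.
Hypothesis q_gt0 : forall w, 0 < p w -> 0 < q (V w).

Lemma relent_ge0 : \sum_t q t <= 1 -> 0 <= relent V q.
Proof.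
move=> q_le1; pose a := distr_of p V.
apply: (@le_trans _ _ (Ex (fun w => 1 - q (V w) / a (V w)))).
  rewrite (Ex_fiber V (fun t => 1 - q t / a t)).
  rewrite (eq_bigr (fun t => a t - a t * (q t / a t))) => [|t _]; last first.
    by rewrite mulrBr mulr1.
  rewrite sumrB sum_distr_of subr_ge0; apply: le_trans q_le1; apply: ler_sum => t _.
  by have [->|nz] := eqVneq (a t) 0; rewrite ?mul0r // mulrCA divff // mulr1.
apply: Ex_le_supp => w pw.
have aw : 0 < a (V w) := Pr_fiber_gt0 V pw.
rewrite -[a _ / _]invf_div lnV ?posrE ?divr_gt0 ?q_gt0 //.
by have := ln_le_subr1 (divr_gt0 (q_gt0 pw) aw); lra.
Qed.

Lemma hellinger_le_relent :
  2 - 2 * \sum_t Num.sqrt (distr_of p V t * q t) <= relent V q.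
Proof.
pose a := distr_of p V.
have sqrt_aq t : a t * Num.sqrt (q t / a t) = Num.sqrt (a t * q t).
  have [->|nz] := eqVneq (a t) 0; first by rewrite !mul0r sqrtr0.
  have -> : a t * q t = a t ^+ 2 * (q t / a t) by rewrite expr2; field.
  by rewrite (sqrtrM (q t / a t) (sqr_ge0 (a t))) sqrtr_sqr ger0_norm ?Pr_ge0.
apply: (@le_trans _ _ (Ex (fun w => 2 * (1 - Num.sqrt (q (V w) / a (V w)))))).
  rewrite (Ex_fiber V (fun t => 2 * (1 - Num.sqrt (q t / a t)))).
  rewrite [X in _ <= X](eq_bigr (fun t => 2 * a t - 2 * Num.sqrt (a t * q t))); last first.
    by move=> t _; rewrite -sqrt_aq /a; ring.
  by rewrite sumrB -!mulr_sumr sum_distr_of mulr1.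
apply: Ex_le_supp => w pw.
have aw : 0 < a (V w) := Pr_fiber_gt0 V pw.
have qw := q_gt0 pw.
set y := Num.sqrt (q (V w) / a (V w)).
have y0 : 0 < y by rewrite sqrtr_gt0 divr_gt0.
have y2 : y ^+ 2 = q (V w) / a (V w) by rewrite sqr_sqrtr // ltW // divr_gt0.
rewrite -[a _ / _]invf_div lnV ?posrE ?divr_gt0 // -y2 expr2 lnM ?posrE //.
by have := ln_le_subr1 y0; lra.
Qed.

Lemma tv_sqr_le_relent : \sum_t q t <= 1 -> tv (distr_of p V) q ^+ 2 <= relent V q.
Proof.
move=> q_le1; apply: le_trans hellinger_le_relent.
by apply: tv_sqr_le_hellinger => // [t|]; [apply: Pr_ge0 | apply: sum_distr_of].
Qed.

End Divergence.

Lemma eq_relent_supp (T : finType) (V : S -> T) (q q' : T -> R) :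
  (forall w, 0 < p w -> q (V w) = q' (V w)) -> relent V q = relent V q'.
Proof. by move=> qq; apply: Ex_eq_supp => w pw; rewrite qq. Qed.

(* The paper's P_G K: draw g from P_G, then a from K(., g). *)
Definition distr_kernel (TA TG : finType) (G : S -> TG) (K : TA -> TG -> R)
    (ag : TA * TG) : R :=
  distr_of p G ag.2 * K ag.1 ag.2.

Section Kernel.
Variables (TA TG : finType) (A : S -> TA) (G : S -> TG) (K : TA -> TG -> R).
Hypothesis K_ge0 : forall a g, 0 <= K a g.
Hypothesis K_sum_le1 : forall g, \sum_a K a g <= 1.
Hypothesis K_gt0 : forall w, 0 < p w -> 0 < K (A w) (G w).

Lemma distr_kernel_ge0 ag : 0 <= distr_kernel G K ag.
Proof. by rewrite mulr_ge0 ?Pr_ge0. Qed.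

Lemma sum_distr_kernel_le1 : \sum_ag distr_kernel G K ag <= 1.
Proof.
rewrite -(pair_bigA _ (fun a g => distr_kernel G K (a, g))) exchange_big /=.
rewrite -(sum_distr_of G); apply: ler_sum => g _.
by rewrite /distr_kernel /= -mulr_sumr ler_piMr ?Pr_ge0.
Qed.

Lemma distr_kernel_gt0 w : 0 < p w -> 0 < distr_kernel G K (A w, G w).
Proof. by move=> pw; rewrite mulr_gt0 ?K_gt0 ?Pr_fiber_gt0. Qed.

Lemma relent_kernel_ge0 : 0 <= relent (fun w => (A w, G w)) (distr_kernel G K).
Proof.
apply: relent_ge0; [exact: distr_kernel_ge0 | exact: distr_kernel_gt0 |].
exact: sum_distr_kernel_le1.
Qed.

Lemma tv_sqr_le_relent_kernel :
  tv (distr_of p (fun w => (A w, G w))) (distr_kernel G K) ^+ 2 <=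
  relent (fun w => (A w, G w)) (distr_kernel G K).
Proof.
apply: tv_sqr_le_relent; [exact: distr_kernel_ge0 | exact: distr_kernel_gt0 |].
exact: sum_distr_kernel_le1.
Qed.

End Kernel.

Lemma relent_kernel_const (TA TG : finType) (A : S -> TA) (g : TG) (K : TA -> TG -> R) :
  relent (fun w => (A w, g)) (distr_kernel (fun _ => g) K) = relent A (fun a => K a g).
Proof.
apply: eq_bigr => w _; rewrite /distr_kernel /= distr_of_pair.
have -> : distr_of p (fun _ => g) g = 1 by rewrite -p_sum1; apply: eq_bigl => s; rewrite eqxx.
by rewrite mul1r; congr (_ * ln (_ / _)); apply: eq_bigl => s; rewrite eqxx andbT.
Qed.

Lemma sum_relent_kernel_le (I : finType) (J : pred I) (TA TG : finType)
    (A : I -> S -> TA) (G : S -> TG) (K : I -> TA -> TG -> R) :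
  (forall i a g, 0 <= K i a g) -> (forall i g, \sum_a K i a g <= 1) ->
  (forall i w, 0 < p w -> 0 < K i (A i w) (G w)) ->
  \sum_(i | J i) relent (fun w => (A i w, G w)) (distr_kernel G (K i)) <=
  relent (fun w => ([ffun i => A i w], G w))
         (distr_kernel G (fun (a : {ffun I -> TA}) g => \prod_i K i (a i) g)).
Proof.
move=> K_ge0 K_le1 K_gt0.
(* The gap is the divergence of the joint law from the product of the P(A_i | G). *)
pose Kc (a : {ffun I -> TA}) g := \prod_i cond_kernel p (A i) G g (a i).
have gap : 0 <= relent (fun w => ([ffun i => A i w], G w)) (distr_kernel G Kc).
  apply: relent_kernel_ge0 => [a g|g|w pw].
  - by apply: prodr_ge0 => i _; apply: cond_kernel_ge0.
  - rewrite /Kc -(bigA_distr_bigA (fun i a => cond_kernel p (A i) G g a)) /=.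
    apply: prodr_ile1 => i _; rewrite sum_cond_kernel_le1 andbT.
    by apply: sumr_ge0 => a _; apply: cond_kernel_ge0.
  - apply: prodr_gt0 => i _; rewrite ffunE; exact: cond_kernel_gt0.
apply: (@le_trans _ _ (\sum_i relent (fun w => (A i w, G w)) (distr_kernel G (K i)))).
  rewrite [X in _ <= X](bigID J) /= lerDl; apply: sumr_ge0 => i _.
  by apply: relent_kernel_ge0; [exact: K_ge0 | exact: K_le1 | exact: K_gt0].
rewrite -subr_ge0 (_ : _ - _ = relent (fun w => ([ffun i => A i w], G w))
                                    (distr_kernel G Kc)) //.
rewrite /relent -Ex_sum -ExB; apply: Ex_eq_supp => w pw.
rewrite /distr_kernel /= /Kc; under eq_bigr do rewrite ffunE.
under [in RHS]eq_bigr do rewrite ffunE /cond_kernel -(distr_of_pair (A _) G).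
rewrite -(ln_chain (g := distr_of p G (G w))
           (d := fun i => distr_of p (fun s => (A i s, G s)) (A i w, G w))
           (k := fun i => K i (A i w) (G w))) ?Pr_fiber_gt0 //.
- by rewrite addrC addKr.
- by move=> i; rewrite Pr_fiber_gt0.
- by move=> i; rewrite K_gt0.
Qed.

Lemma relent_kernel_coarsen (TX TG TH : finType) (X : S -> TX) (G : S -> TG)
    (H : S -> TH) (h : TG -> TH) (lam : TX -> TH -> R) :
  (forall w, H w = h (G w)) -> (forall w, 0 < p w -> 0 < lam (X w) (H w)) ->
  relent (fun w => (X w, H w)) (distr_kernel H lam) <=
  relent (fun w => (X w, G w)) (distr_kernel G (fun x g => lam x (h g))).
Proof.
move=> HE lam_gt0.
have gap : 0 <= relent (fun w => (X w, G w))
                  (distr_kernel G (fun x g => cond_kernel p X H (h g) x)).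
  apply: relent_kernel_ge0 => [x g|g|w pw].
  - exact: cond_kernel_ge0.
  - exact: sum_cond_kernel_le1.
  - by rewrite -HE cond_kernel_gt0.
rewrite -subr_ge0 (_ : _ - _ = relent (fun w => (X w, G w))
          (distr_kernel G (fun x g => cond_kernel p X H (h g) x))) //.
rewrite /relent -ExB; apply: Ex_eq_supp => w pw; rewrite /distr_kernel /= -HE.
rewrite /cond_kernel -distr_of_pair.
have xg := Pr_fiber_gt0 (fun s => (X s, G s)) pw.
have xh := Pr_fiber_gt0 (fun s => (X s, H s)) pw.
have gw := Pr_fiber_gt0 G pw; have hw := Pr_fiber_gt0 H pw.
rewrite !ln_divM ?divr_gt0 ?lam_gt0 // ln_div ?posrE //; lra.
Qed.

End FiniteProbability.

(** * Conditioning on an event *)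

Section Conditioning.
Variables (R : realType) (S : finType) (P : S -> R) (W : pred S).
Hypothesis P_ge0 : forall s, 0 <= P s.
Hypothesis P_sum1 : \sum_s P s = 1.
Hypothesis PW_gt0 : 0 < Pr P W.

Definition condP (s : S) : R := P s * (W s)%:R / Pr P W.

Lemma condP_ge0 s : 0 <= condP s.
Proof. by apply: divr_ge0; [apply: mulr_ge0 | apply: ltW]. Qed.

Lemma Pr_condP (E : pred S) : Pr condP E = Pr P (fun s => E s && W s) / Pr P W.
Proof.
rewrite /Pr mulr_suml big_mkcondr /=; apply: eq_bigr => s _.
by rewrite /condP; case: (W s); rewrite ?mulr1 ?mulr0 ?mul0r.
Qed.

Lemma condP_sum1 : \sum_s condP s = 1.
Proof. by have := Pr_condP xpredT; rewrite /= divff ?gt_eqF. Qed.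

Lemma cond_distrE (T : finType) (U : S -> T) : cond_distr P U W =1 distr_of condP U.
Proof. by move=> u; rewrite /distr_of Pr_condP. Qed.

Lemma condP_gt0 w : 0 < condP w -> 0 < P w.
Proof.
by rewrite /condP [0 < P w]lt_def P_ge0 andbT; apply: contraTneq => ->; rewrite !mul0r ltxx.
Qed.

Lemma Pr_condP_le (E : pred S) : Pr condP E <= Pr P E / Pr P W.
Proof. by rewrite Pr_condP ler_pM2r ?invr_gt0 //; apply: le_Pr => // s /andP[]. Qed.

Lemma tv_cond_sqr_le_relent (T : finType) (A : S -> T) :
  tv (cond_distr P A W) (distr_of P A) ^+ 2 <= relent condP A (distr_of P A).
Proof.
rewrite (eq_tv (cond_distrE A) (frefl _)).
apply: (tv_sqr_le_relent condP_ge0 condP_sum1).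
- by move=> a; apply: Pr_ge0.
- by move=> w /condP_gt0 pw; apply: Pr_fiber_gt0.
- by rewrite sum_distr_of.
Qed.

Lemma tv_cond_sqr_le_relent_kernel (TA TG : finType) (A : S -> TA) (G : S -> TG)
    (K : TA -> TG -> R) :
  (forall a g, 0 <= K a g) -> (forall g, \sum_a K a g <= 1) ->
  (forall w, 0 < condP w -> 0 < K (A w) (G w)) ->
  tv (cond_distr P (fun w => (A w, G w)) W)
     (fun ag => cond_distr P G W ag.2 * K ag.1 ag.2) ^+ 2 <=
  relent condP (fun w => (A w, G w)) (distr_kernel condP G K).
Proof.
move=> K_ge0 K_le1 K_gt0.
rewrite (eq_tv (cond_distrE _) (q2 := distr_kernel condP G K)) => [|ag]; last first.
  by rewrite /distr_kernel cond_distrE.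
exact: (tv_sqr_le_relent_kernel condP_ge0 condP_sum1 K_ge0 K_le1 K_gt0).
Qed.

Lemma Ex_ln_fiber_ratio_le (TZ TB : finType) (Z : S -> TZ) (B : S -> TB) (Zr : pred TZ) :
  (forall w, Zr (Z w)) ->
  Ex condP (fun w => ln (distr_of P B (B w) /
                         distr_of condP (fun s => (Z s, B s)) (Z w, B w)))
  <= ln #|Zr|%:R.
Proof.
move=> ZZr.
have [w0 _] := exists_supp condP_sum1.
have N_gt0 : (0 : R) < #|Zr|%:R.
  by rewrite ltr0n; apply/card_gt0P; exists (Z w0); apply: ZZr.
pose q zb := (Zr zb.1)%:R * distr_of P B zb.2 / #|Zr|%:R.
rewrite -subr_ge0 -[X in 0 <= X - _](ExC condP_sum1) -ExB.
rewrite (_ : Ex _ _ = relent condP (fun s => (Z s, B s)) q).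
  apply: (relent_ge0 condP_ge0 condP_sum1) => [zb|w pw|].
  - by rewrite divr_ge0 ?mulr_ge0 ?Pr_ge0 ?ler0n ?ltW.
  - by rewrite /q /= ZZr mul1r divr_gt0 // Pr_fiber_gt0 // condP_gt0.
  - rewrite -(pair_bigA _ (fun z b => q (z, b))) /q /=.
    under eq_bigr do rewrite -mulr_suml -mulr_sumr sum_distr_of // mulr1.
    rewrite -mulr_suml (eq_bigr (fun z => if Zr z then 1 else 0)) => [|z _]; last first.
      by case: (Zr z).
    by rewrite -big_mkcond sumr_const divff ?gt_eqF.
apply: (Ex_eq_supp condP_ge0) => w pw; rewrite /q /= ZZr mul1r.
have e_gt0 := Pr_fiber_gt0 condP_ge0 (fun s => (Z s, B s)) pw.
have b_gt0 := Pr_fiber_gt0 P_ge0 B (condP_gt0 pw).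
by rewrite !ln_div ?posrE ?divr_gt0 //; lra.
Qed.

Section ConditionallyIndependent.
Variables (I TA TZ TB : finType) (A : I -> S -> TA) (Z : S -> TZ) (B : S -> TB).
Variables (K : I -> TA -> TB -> R) (Zr : pred TZ).
Hypothesis ZZr : forall w, Zr (Z w).
Hypothesis K_gt0 : forall i w, 0 < condP w -> 0 < K i (A i w) (B w).
Hypothesis Pr_AB : forall w, 0 < condP w ->
  Pr P (fun s => [forall i, A i s == A i w] && (B s == B w)) =
  \prod_i K i (A i w) (B w) * Pr P (fun s => B s == B w).

Lemma relent_condP_le :
  relent condP (fun w => ([ffun i => A i w], (Z w, B w)))
    (distr_kernel condP (fun w => (Z w, B w))
       (fun (a : {ffun I -> TA}) zb => \prod_i K i (a i) zb.2))
  <= ln (Pr P W)^-1 + ln #|Zr|%:R.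
Proof.
(* Pointwise, condP(A, Z, B) <= P(A, B) / P(W) = P(B) prod K / P(W); the remaining
   term E[ln P(B) / condP(Z, B)] is at most the log of the range of Z. *)
apply: (@le_trans _ _ (Ex condP (fun w => ln (Pr P W)^-1 +
           ln (distr_of P B (B w) / distr_of condP (fun s => (Z s, B s)) (Z w, B w))))).
  apply: (Ex_le_supp condP_ge0) => w pw; rewrite /distr_kernel /=.
  set e := distr_of condP _ _; set g := distr_of condP _ _; set b := distr_of P B (B w).
  have e_gt0 : 0 < e := Pr_fiber_gt0 condP_ge0 _ pw.
  have g_gt0 : 0 < g := Pr_fiber_gt0 condP_ge0 (fun s => (Z s, B s)) pw.
  have b_gt0 : 0 < b := Pr_fiber_gt0 P_ge0 B (condP_gt0 pw).
  have k_gt0 : 0 < \prod_i K i ([ffun i => A i w] i) (B w).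
    by apply: prodr_gt0 => i _; rewrite ffunE K_gt0.
  rewrite -lnM ?posrE ?invr_gt0 ?divr_gt0 // ler_ln ?posrE ?divr_gt0 ?mulr_gt0 ?invr_gt0 //.
  rewrite ler_pdivrMr ?mulr_gt0 //.
  have -> : (Pr P W)^-1 * (b / g) * (g * \prod_i K i ([ffun i => A i w] i) (B w)) =
            \prod_i K i (A i w) (B w) * b / Pr P W.
    by under eq_bigr do rewrite ffunE; field; rewrite !gt_eqF.
  rewrite -Pr_AB //; apply: le_trans (Pr_condP_le _) _.
  rewrite ler_pM2r ?invr_gt0 //; apply: (le_Pr P_ge0) => s.
  by rewrite !xpair_eqE ffun_eqE => /andP[-> /andP[_ ->]].
by rewrite ExD ExC ?condP_sum1 // lerD2l; apply: Ex_ln_fiber_ratio_le.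
Qed.

Lemma sum_relent_condP_le (J : pred I) :
  (forall i a b, 0 <= K i a b) -> (forall i b, \sum_a K i a b <= 1) ->
  \sum_(i | J i) relent condP (fun w => (A i w, (Z w, B w)))
      (distr_kernel condP (fun w => (Z w, B w)) (fun a zb => K i a zb.2))
  <= ln (Pr P W)^-1 + ln #|Zr|%:R.
Proof.
move=> K_ge0 K_le1; apply: le_trans relent_condP_le.
exact: (sum_relent_kernel_le condP_ge0 condP_sum1).
Qed.

End ConditionallyIndependent.

End Conditioning.

Lemma card_ord_lt (n m : nat) : (m <= n)%N -> #|[pred i : 'I_n | (i < m)%N]| = m.
Proof.
move=> mn; rewrite -sum1_card -[RHS]card_ord -sum1_card.
by rewrite (big_ord_widen _ (fun _ => 1%N) mn); apply: eq_bigl => i.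
Qed.

Lemma card_ord_ge (n m : nat) : #|[pred i : 'I_n | (m <= i)%N]| = (n - m)%N.
Proof.
rewrite -sum1_card -[RHS]muln1 -sum_nat_const_nat big_geq_mkord.
by apply: eq_bigl => i.
Qed.

Lemma avg_m_le_sqrt (R : realType) (n m : nat) (t : 'I_n -> R) (d : R) :
  (0 < m)%N -> (m <= n)%N -> (forall i, 0 <= t i) ->
  \sum_(i < n | (i < m)%N) t i ^+ 2 <= m%:R * d -> avg_m m t <= Num.sqrt d.
Proof.
move=> m_gt0 mn t_ge0 sum_le.
have m_pos : (0 : R) < m%:R by rewrite ltr0n.
have CS : (\sum_(i < n | (i < m)%N) t i) ^+ 2 <=
          m%:R * \sum_(i < n | (i < m)%N) t i ^+ 2.
  have := cauchy_schwarz (fun i : 'I_n => (i < m)%N) (fun _ => 1) t.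
  under eq_bigr do rewrite mul1r; under [X in _ <= X * _]eq_bigr do rewrite expr1n.
  by rewrite sumr_const card_ord_lt.
have avg_ge0 : 0 <= avg_m m t by rewrite mulr_ge0 ?invr_ge0 ?ler0n ?sumr_ge0.
have avg2 : avg_m m t ^+ 2 <= d.
  rewrite -(ler_pM2l (exprn_gt0 2 m_pos)) -exprMn /avg_m mulrA divff ?gt_eqF // mul1r.
  by apply: le_trans CS _; rewrite expr2 -mulrA ler_pM2l.
by rewrite -(ger0_norm avg_ge0) -sqrtr_sqr ler_sqrt // (le_trans _ avg2) ?sqr_ge0.
Qed.

(** * The repeated game *)

Section RepeatedGame.
Variables (R : realType) (k : nat) (Xs As : 'I_k -> finType) (mu : QX Xs -> R).
Variables (n : nat) (anc : forall t, {set Xs t}) (m : nat)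
          (f : forall t, {ffun 'I_n -> Xs t} -> {ffun 'I_n -> As t}).
Hypothesis k_gt0 : (0 < k)%N.
Hypothesis mu_distr : is_distr mu.

Local Notation Sp := (Sp Xs n).
Local Notation P := (sampleP (n := n) mu).

Definition nu (D : {set 'I_k}) : R :=
  (#|D| == k.-1)%:R / #|[set D : {set 'I_k} | #|D| == k.-1]|%:R.

Lemma nu_ge0 D : 0 <= nu D.
Proof. by rewrite divr_ge0 ?ler0n. Qed.

Lemma nu_sum1 : \sum_D nu D = 1.
Proof.
have card_sub : #|[set D : {set 'I_k} | #|D| == k.-1]| = k.
  by rewrite card_draws card_ord -(subn1 k) bin_sub // bin1.
rewrite /nu -mulr_suml (eq_bigr (fun D : {set 'I_k} => if #|D| == k.-1 then 1 else 0 : R)).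
  rewrite -big_mkcond sumr_const (eq_card (B := [set D : {set 'I_k} | #|D| == k.-1])).
    by rewrite divff // card_sub pnatr_eq0 -lt0n.
  by move=> D; rewrite inE.
by move=> D _; case: (_ == _).
Qed.

Lemma sum_mu_nu : \sum_x \sum_D mu x * nu D = 1.
Proof.
case: mu_distr => _ mu_sum1.
by under eq_bigr do rewrite -mulr_sumr nu_sum1 mulr1.
Qed.

Lemma sum_prod_Sp (F : 'I_n -> QX Xs -> {set 'I_k} -> R) :
  \sum_(w : Sp) \prod_i F i (w.1 i) (w.2 i) = \prod_i \sum_x \sum_D F i x D.
Proof.
rewrite -(pair_bigA _ (fun (x : {ffun 'I_n -> QX Xs}) (D : {ffun 'I_n -> {set 'I_k}}) =>
                          \prod_i F i (x i) (D i))) /=.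
by rewrite bigA_distr_bigA; apply: eq_bigr => x _; rewrite bigA_distr_bigA.
Qed.

Lemma P_ge0 w : 0 <= P w.
Proof.
case: mu_distr => mu_ge0 _.
by rewrite mulr_ge0 // prodr_ge0 // => i _; apply: nu_ge0.
Qed.

Lemma Pr_rect (e : 'I_n -> QX Xs -> {set 'I_k} -> bool) :
  Pr P (fun w => [forall i, e i (w.1 i) (w.2 i)]) =
  \prod_i \sum_x \sum_D (e i x D)%:R * mu x * nu D.
Proof.
rewrite -sum_prod_Sp /Pr big_mkcond /=; apply: eq_bigr => w _.
rewrite /sampleP -!big_split /=.
case: forallP => [e_all | /forallP/forallPn[i /negbTE ei]].
  by apply: eq_bigr => i _; rewrite e_all mul1r mulrA.
by rewrite (bigD1 i) //= ei !mul0r.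
Qed.

Lemma P_sum1 : \sum_w P w = 1.
Proof.
have := Pr_rect (fun _ _ _ => true); rewrite big1 => [<-|i _].
  by apply: eq_bigl => w; apply/esym/forallP.
by under eq_bigr do under eq_bigr do rewrite mul1r; apply: sum_mu_nu.
Qed.

Definition local_at (i : 'I_n) (T : Type) (U : Sp -> T) :=
  forall s s' : Sp, s.1 i = s'.1 i -> s.2 i = s'.2 i -> U s = U s'.

Definition at_coord (x : QX Xs) (D : {set 'I_k}) : Sp := ([ffun=> x], [ffun=> D]).

Lemma local_atE i (T : Type) (U : Sp -> T) s :
  local_at i U -> U s = U (at_coord (s.1 i) (s.2 i)).
Proof. by move=> U_loc; apply: U_loc; rewrite /= ffunE. Qed.

Lemma Pr_local i (E : pred Sp) :
  local_at i E -> Pr P E = \sum_x \sum_D (E (at_coord x D))%:R * mu x * nu D.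
Proof.
move=> E_loc.
pose e j x D := if j == i then E (at_coord x D) else true.
rewrite (@eq_Pr _ _ _ _ (fun w : Sp => [forall j, e j (w.1 j) (w.2 j)])) => [|w].
  rewrite Pr_rect (bigD1 i) //= [X in _ * X]big1 => [|j /negbTE ji].
    by rewrite mulr1 /e eqxx.
  by rewrite /e ji; under eq_bigr do under eq_bigr do rewrite mul1r; apply: sum_mu_nu.
apply/idP/forallP => [Ew j | /(_ i)]; rewrite /e; last by rewrite eqxx -local_atE.
by case: eqP => // ->; rewrite -local_atE.
Qed.

Lemma Pr_prod (E : 'I_n -> pred Sp) :
  (forall i, local_at i (E i)) ->
  Pr P (fun s => [forall i, E i s]) = \prod_i Pr P (E i).
Proof.
move=> E_loc.
rewrite (@eq_Pr _ _ _ _ (fun s : Sp => [forall i, E i (at_coord (s.1 i) (s.2 i))])).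
  rewrite (Pr_rect (fun i x D => E i (at_coord x D))).
  by apply: eq_bigr => i _; rewrite (Pr_local (E_loc i)).
by move=> s; apply: eq_forallb => i; rewrite -local_atE.
Qed.

Lemma Pr_indep_coord_set i (E : pred Sp) (d : {set 'I_k}) :
  (forall s s' : Sp, s.1 i = s'.1 i -> E s = E s') ->
  Pr P (fun s => E s && (s.2 i == d)) = Pr P E * nu d.
Proof.
move=> E_loc.
have E_at x D : E (at_coord x D) = E (at_coord x d) by apply: E_loc; rewrite /= !ffunE.
have ED_loc : local_at i (fun s => E s && (s.2 i == d)).
  by move=> s s' e1 e2; rewrite (E_loc s s') // e2.
rewrite (Pr_local ED_loc) (@Pr_local i E) => [|s s' e1 _]; last exact: E_loc.
rewrite mulr_suml; apply: eq_bigr => x _.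
rewrite (bigD1 d) //= big1 => [|D Dd]; last by rewrite ffunE (negbTE Dd) andbF !mul0r.
rewrite ffunE eqxx andbT addr0.
under [X in _ = X * _]eq_bigr => D _ do rewrite (E_at x D) -mulrA.
by rewrite -!mulr_sumr nu_sum1 mulr1 mulrA.
Qed.

Lemma local_Xv i : local_at i (@Xv k Xs n i).
Proof. by move=> s s' e1 _; rewrite /Xv e1. Qed.

Lemma local_Yv i : local_at i (Yv anc i).
Proof. by move=> s s' e1 _; rewrite /Yv e1. Qed.

Lemma local_Omv i : local_at i (Omv anc m i).
Proof. by move=> s s' e1 e2; rewrite /Omv /Mv /Yv e1 e2. Qed.

Lemma local_pair i (T1 T2 : Type) (U1 : Sp -> T1) (U2 : Sp -> T2) :
  local_at i U1 -> local_at i U2 -> local_at i (fun s => (U1 s, U2 s)).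
Proof. by move=> U1_loc U2_loc s s' e1 e2; rewrite (U1_loc s s') ?(U2_loc s s'). Qed.

Lemma Pr_fiber_prod (T : eqType) (U : 'I_n -> Sp -> T) w :
  (forall i, local_at i (U i)) ->
  Pr P (fun s => [forall i, U i s == U i w]) = \prod_i Pr P (fun s => U i s == U i w).
Proof. by move=> U_loc; apply: Pr_prod => i s s' e1 e2; rewrite (U_loc i s s'). Qed.

Lemma Pr_fiber_prod_kernel (TU TV : finType) (U : 'I_n -> Sp -> TU)
    (V : 'I_n -> Sp -> TV) w :
  (forall i, local_at i (U i)) -> (forall i, local_at i (V i)) -> 0 < P w ->
  Pr P (fun s => [forall i, U i s == U i w] && [forall i, V i s == V i w]) =
  \prod_i cond_kernel P (U i) (V i) (V i w) (U i w) *
  Pr P (fun s => [forall i, V i s == V i w]).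
Proof.
move=> U_loc V_loc pw.
rewrite (@eq_Pr _ _ _ _ (fun s => [forall i, (U i s, V i s) == (U i w, V i w)])); last first.
  by move=> s; rewrite -forall_andE; apply: eq_forallb => i; rewrite xpair_eqE.
rewrite !Pr_fiber_prod // => [|i]; last exact: local_pair.
rewrite -big_split /=; apply: eq_bigr => i _.
by rewrite /cond_kernel divfK ?gt_eqF ?(Pr_gt0 P_ge0 pw).
Qed.

(* For i < m, Omega_i = (D_i, M_i) where M_i is a function of Y_i and D_i. *)
Lemma fiber_Yv_Omv (i : 'I_n) (s w : Sp) : (i < m)%N ->
  ((Yv anc i s, Omv anc m i s) == (Yv anc i w, Omv anc m i w)) =
  (Yv anc i s == Yv anc i w) && (s.2 i == w.2 i).
Proof.
move=> im; rewrite xpair_eqE /Omv im.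
have [eY|] //= := eqVneq (Yv anc i s) (Yv anc i w).
by apply/eqP/eqP => [[]|eD] //; rewrite /Mv -/(Yv anc i s) eY eD.
Qed.

Lemma cond_kernel_Xv_Yv_Omv (i : 'I_n) (w : Sp) : (i < m)%N -> 0 < P w ->
  cond_kernel P (Xv i) (fun s => (Yv anc i s, Omv anc m i s))
              (Yv anc i w, Omv anc m i w) (Xv i w) =
  cond_kernel P (Xv i) (Yv anc i) (Yv anc i w) (Xv i w).
Proof.
move=> im pw; rewrite /cond_kernel.
rewrite (@eq_Pr _ _ _ _ (fun s => ((Xv i s == Xv i w) && (Yv anc i s == Yv anc i w))
                                    && (s.2 i == w.2 i))); last first.
  by move=> s; rewrite fiber_Yv_Omv // andbA.
rewrite (@eq_Pr _ _ _
           (fun s => (Yv anc i s, Omv anc m i s) == (Yv anc i w, Omv anc m i w))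
           (fun s => (Yv anc i s == Yv anc i w) && (s.2 i == w.2 i))); last first.
  by move=> s; rewrite fiber_Yv_Omv.
have YD_gt0 : 0 < Pr P (fun s => Yv anc i s == Yv anc i w) * nu (w.2 i).
  rewrite -(@Pr_indep_coord_set i) => [|s s' e]; last by rewrite /Yv e.
  by apply: (Pr_gt0 P_ge0 pw); rewrite !eqxx.
rewrite !(@Pr_indep_coord_set i) => [|s s' e1|s s' e1]; last 2 first.
- by rewrite /Yv e1.
- by rewrite /Xv /Yv e1.
rewrite invfM mulrACA divff ?mulr1 //.
by move: YD_gt0; apply: contraTneq => ->; rewrite mulr0 ltxx.
Qed.

Definition Zrange (z : {ffun 'I_n -> option (AX As)}) : bool :=
  [forall j : 'I_n, (m <= j)%N == (z j != None)].

Lemma Zv_Zrange w : Zrange (Zv f m w).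
Proof. by apply/forallP => j; rewrite /Zv ffunE; case: leqP. Qed.

Lemma card_Zrange : #|Zrange| = (#|AX As| ^ (n - m))%N.
Proof.
pose F (j : 'I_n) := [pred o : option (AX As) | (m <= j)%N == (o != None)].
rewrite (eq_card (B := family F)) => [|z]; last by rewrite !inE.
rewrite card_family foldrE big_map big_enum /=.
rewrite (eq_bigr (fun j : 'I_n => if (m <= j)%N then #|AX As| else 1%N)) => [|j _].
  by rewrite -big_mkcond prod_nat_const card_ord_ge.
case: (m <= j)%N; rewrite /F.
- have := cardC1 (None : option (AX As)); rewrite card_option /= => <-.
  by apply: eq_card => o; rewrite !inE.
- by rewrite -(card1 (None : option (AX As))); apply: eq_card => o; rewrite !inE; case: o.
Qed.

Variable V : QX Xs -> AX As -> bool.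
Hypotheses (m_ge1 : (1 <= m)%N) (m_lt_n : (m < n)%N).
Local Notation W := (Wev f m V).
Hypothesis PW_gt0 : 0 < Pr P W.
Local Notation condW := (condP P W).
Local Notation delta :=
  (((n - m)%:R * log2 (#|AX As|%:R : R) + log2 (Pr P W)^-1) / m%:R).

(* The divergences are in nats and delta in bits; ln 2 <= 1 absorbs the difference. *)
Lemma avg_le_sqrt_delta (t : 'I_n -> R) :
  (forall i, 0 <= t i) ->
  \sum_(i < n | (i < m)%N) t i ^+ 2 <= ln (Pr P W)^-1 + ln #|Zrange|%:R ->
  avg_m m t <= Num.sqrt delta.
Proof.
move=> t_ge0 sum_le.
have A_gt0 : (0 < #|AX As|)%N.
  by have [w _] := exists_supp P_sum1; apply/card_gt0P; exists (Av f (Ordinal m_lt_n) w).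
have ln2_gt0 : (0 : R) < ln 2 by rewrite ln_gt0 // ltr1n.
have ln2_le1 : ln (2 : R) <= 1 by have := @ln_le_subr1 R 2 (ltr0Sn _ 1); lra.
have m_pos : (0 : R) < m%:R by rewrite ltr0n.
have delta_ln2 : m%:R * delta * ln 2 = ln (Pr P W)^-1 + ln #|Zrange|%:R.
  rewrite card_Zrange natrX lnXn ?ltr0n // -mulr_natl /log2.
  by field; rewrite !gt_eqF.
apply: avg_m_le_sqrt => //; first exact: ltnW.
rewrite -delta_ln2 in sum_le.
have sum_ge0 : 0 <= \sum_(i < n | (i < m)%N) t i ^+ 2 by apply: sumr_ge0 => i _; apply: sqr_ge0.
have md_ge0 : 0 <= m%:R * delta by rewrite -(pmulr_lge0 _ ln2_gt0); apply: le_trans sum_le.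
by apply: le_trans sum_le _; rewrite ler_piMr.
Qed.

Lemma sum_relent_XYOm_le :
  \sum_(i < n | (i < m)%N)
    relent condW (fun w => (Xv i w, Yv anc i w, Omv anc m i w))
      (distr_of P (fun w => (Xv i w, Yv anc i w, Omv anc m i w)))
  <= ln (Pr P W)^-1 + ln #|Zrange|%:R.
Proof.
pose A (i : 'I_n) (w : Sp) := (Xv i w, Yv anc i w, Omv anc m i w).
have A_loc i : local_at i (A i).
  by apply: local_pair; [apply: local_pair|]; [exact: local_Xv|exact: local_Yv|exact: local_Omv].
apply: (@le_trans _ _ (ln (Pr P W)^-1 + ln #|@predT unit|%:R)); last first.
  have [w _] := exists_supp P_sum1.
  rewrite lerD2l card_unit ln1 ln_ge0 // ler1n.
  by apply/card_gt0P; exists (Zv f m w); apply: Zv_Zrange.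
under eq_bigr => i _ do rewrite -(relent_kernel_const (condP_sum1 PW_gt0) (A i) (tt, tt)
                                   (fun a _ => distr_of P (A i) a)).
apply: (sum_relent_condP_le P_ge0 P_sum1 PW_gt0 (Z := fun _ => tt) (B := fun _ => tt)
          (K := fun i a (_ : unit) => distr_of P (A i) a)) => // [i w|w _|i a _|i _].
- by move=> /(condP_gt0 P_ge0) pw; apply: (Pr_fiber_gt0 P_ge0 (A i) pw).
- rewrite (_ : Pr P (fun=> tt == tt) = 1) ?mulr1; last exact: P_sum1.
  rewrite (@eq_Pr _ _ _ _ (fun s => [forall i, A i s == A i w])) => [|s]; last by rewrite andbT.
  exact: Pr_fiber_prod.
- exact: (Pr_ge0 P_ge0).
- by rewrite (sum_distr_of P_sum1).
Qed.

Definition kernel_Y (i : 'I_n) (y : YT Xs) (o : {ffun 'I_n -> OT Xs}) : R :=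
  cond_kernel P (Yv anc i) (Omv anc m i) (o i) y.

Lemma tv_YOm_kernel_sqr_le i :
  tv (cond_distr P (fun w => (Yv anc i w, (Zv f m w, Omall anc m w))) W)
     (fun p : YT Xs * ({ffun 'I_n -> option (AX As)} * {ffun 'I_n -> OT Xs}) =>
        cond_distr P (fun w => (Zv f m w, Omall anc m w)) W p.2
        * cond_kernel P (Yv anc i) (Omv anc m i) (p.2.2 i) p.1) ^+ 2
  <= relent condW (fun w => (Yv anc i w, (Zv f m w, Omall anc m w)))
       (distr_kernel condW (fun w => (Zv f m w, Omall anc m w))
          (fun y zo => kernel_Y i y zo.2)).
Proof.
apply: (tv_cond_sqr_le_relent_kernel P_ge0 PW_gt0) => [y zo|zo|w /(condP_gt0 P_ge0) pw].
- exact: (cond_kernel_ge0 P_ge0).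
- exact: sum_cond_kernel_le1.
- by rewrite /kernel_Y ffunE (cond_kernel_gt0 P_ge0).
Qed.

Lemma sum_relent_YOm_kernel_le :
  \sum_(i < n | (i < m)%N)
    relent condW (fun w => (Yv anc i w, (Zv f m w, Omall anc m w)))
      (distr_kernel condW (fun w => (Zv f m w, Omall anc m w))
         (fun y zo => kernel_Y i y zo.2))
  <= ln (Pr P W)^-1 + ln #|Zrange|%:R.
Proof.
apply: (sum_relent_condP_le P_ge0 P_sum1 PW_gt0) => [w|i w|w|i y o|i o].
- exact: Zv_Zrange.
- by move=> /(condP_gt0 P_ge0) pw; rewrite /kernel_Y ffunE (cond_kernel_gt0 P_ge0).
- move=> /(condP_gt0 P_ge0) pw; rewrite /kernel_Y; under eq_bigr do rewrite ffunE.
  have fiber_Om s : (Omall anc m s == Omall anc m w) =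
                    [forall i, Omv anc m i s == Omv anc m i w].
    by rewrite /Omall ffun_eqE.
  rewrite (eq_Pr P fiber_Om) -(Pr_fiber_prod_kernel local_Yv local_Omv pw).
  by apply: eq_Pr => s; rewrite fiber_Om.
- exact: (cond_kernel_ge0 P_ge0).
- exact: sum_cond_kernel_le1.
Qed.

Definition Yall (w : Sp) : {ffun 'I_n -> YT Xs} := [ffun i => Yv anc i w].

Definition kernel_X (i : 'I_n) (x : QX Xs)
    (yo : {ffun 'I_n -> YT Xs} * {ffun 'I_n -> OT Xs}) : R :=
  cond_kernel P (Xv i) (fun s => (Yv anc i s, Omv anc m i s)) (yo.1 i, yo.2 i) x.

(* Conditioning on the finer variable (Z, Y, Omega) can only increase the divergence, and
   given (Y_i, Omega_i) the question X_i still has the law of X_i given Y_i. *)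
Lemma tv_XY_kernel_sqr_le (i : 'I_n) : (i < m)%N ->
  tv (cond_distr P (fun w => (Xv i w, (Yv anc i w, Zv f m w, Omminus anc m i w))) W)
     (fun p : QX Xs * (YT Xs * {ffun 'I_n -> option (AX As)}
                       * {ffun 'I_n -> option (OT Xs)}) =>
        cond_distr P (fun w => (Yv anc i w, Zv f m w, Omminus anc m i w)) W p.2
        * cond_kernel P (Xv i) (Yv anc i) p.2.1.1 p.1) ^+ 2
  <= relent condW (fun w => (Xv i w, (Zv f m w, (Yall w, Omall anc m w))))
       (distr_kernel condW (fun w => (Zv f m w, (Yall w, Omall anc m w)))
          (fun x zyo => kernel_X i x zyo.2)).
Proof.
move=> im.
pose G w := (Zv f m w, (Yall w, Omall anc m w)).
pose H w := (Yv anc i w, Zv f m w, Omminus anc m i w).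
pose lam x (yzo : YT Xs * {ffun 'I_n -> option (AX As)} * {ffun 'I_n -> option (OT Xs)}) :=
  cond_kernel P (Xv i) (Yv anc i) yzo.1.1 x.
pose h (g : {ffun 'I_n -> option (AX As)} * ({ffun 'I_n -> YT Xs} * {ffun 'I_n -> OT Xs})) :=
  (g.2.1 i, g.1, [ffun j => if j == i then None else Some (g.2.2 j)]).
have lam_gt0 w : 0 < condW w -> 0 < lam (Xv i w) (H w).
  by move=> /(condP_gt0 P_ge0) pw; apply: (cond_kernel_gt0 P_ge0).
apply: (@le_trans _ _ (relent condW (fun w => (Xv i w, H w)) (distr_kernel condW H lam))).
  apply: (tv_cond_sqr_le_relent_kernel P_ge0 PW_gt0) => // [x yzo|yzo].
  - exact: (cond_kernel_ge0 P_ge0).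
  - exact: sum_cond_kernel_le1.
apply: le_trans (relent_kernel_coarsen (condP_ge0 P_ge0 PW_gt0) (condP_sum1 PW_gt0)
                   (G := G) (h := h) _ lam_gt0) _.
  move=> w; rewrite /H /h /G /= /Yall ffunE; congr (_, _).
  by apply/ffunP => j; rewrite !ffunE.
rewrite (eq_relent_supp (condP_ge0 P_ge0 PW_gt0)
           (q' := distr_kernel condW G (fun x g => kernel_X i x g.2))) //.
move=> w /(condP_gt0 P_ge0) pw; rewrite /distr_kernel /= /lam /h /kernel_X /= !ffunE.
by rewrite cond_kernel_Xv_Yv_Omv.
Qed.

Lemma sum_relent_XY_kernel_le :
  \sum_(i < n | (i < m)%N)
    relent condW (fun w => (Xv i w, (Zv f m w, (Yall w, Omall anc m w))))
      (distr_kernel condW (fun w => (Zv f m w, (Yall w, Omall anc m w)))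
         (fun x zyo => kernel_X i x zyo.2))
  <= ln (Pr P W)^-1 + ln #|Zrange|%:R.
Proof.
have YOm_loc i : local_at i (fun s => (Yv anc i s, Omv anc m i s)).
  by apply: local_pair; [exact: local_Yv | exact: local_Omv].
apply: (sum_relent_condP_le P_ge0 P_sum1 PW_gt0 (A := fun i => Xv i))
  => [w|i w|w|i x yo|i yo].
- exact: Zv_Zrange.
- by move=> /(condP_gt0 P_ge0) pw; rewrite /kernel_X !ffunE (cond_kernel_gt0 P_ge0).
- move=> /(condP_gt0 P_ge0) pw; rewrite /kernel_X; under eq_bigr do rewrite !ffunE.
  have fiber_YOm s : ((Yall s, Omall anc m s) == (Yall w, Omall anc m w)) =
      [forall i, (Yv anc i s, Omv anc m i s) == (Yv anc i w, Omv anc m i w)].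
    rewrite xpair_eqE /Yall /Omall !ffun_eqE -forall_andE.
    by apply: eq_forallb => i; rewrite xpair_eqE.
  rewrite (eq_Pr P fiber_YOm) -(Pr_fiber_prod_kernel local_Xv YOm_loc pw).
  by apply: eq_Pr => s; rewrite fiber_YOm.
- exact: (cond_kernel_ge0 P_ge0).
- exact: sum_cond_kernel_le1.
Qed.

End RepeatedGame.

Theorem lemma4p3 (R : realType) (k : nat) (Xs As : 'I_k -> finType)
  (mu : QX Xs -> R) (V : QX Xs -> AX As -> bool)
  (alpha : R) (anc : forall t, {set Xs t})
  (n m : nat) (f : forall t, {ffun 'I_n -> Xs t} -> {ffun 'I_n -> As t}) :
  (0 < k)%N ->
  is_distr mu ->
  anchored mu alpha anc ->
  (1 <= m)%N -> (m < n)%N ->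
  let P := sampleP mu in
  let W := Wev f m V in
  0 < Pr P W ->
  let delta := ((n - m)%:R * log2 (#|AX As|%:R : R) + log2 (Pr P W)^-1) / m%:R in
  [/\ avg_m m (fun i =>
        tv (cond_distr P (fun w => (Xv i w, Yv anc i w, Omv anc m i w)) W)
           (distr_of P (fun w => (Xv i w, Yv anc i w, Omv anc m i w))))
        <= Num.sqrt delta,
      avg_m m (fun i =>
        tv (cond_distr P (fun w => (Xv i w, (Yv anc i w, Zv f m w, Omminus anc m i w))) W)
           (fun p : QX Xs * (YT Xs * {ffun 'I_n -> option (AX As)}
                             * {ffun 'I_n -> option (OT Xs)}) =>
              cond_distr P (fun w => (Yv anc i w, Zv f m w, Omminus anc m i w)) W p.2
              * cond_kernel P (Xv i) (Yv anc i) p.2.1.1 p.1))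
        <= Num.sqrt delta
    & avg_m m (fun i =>
        tv (cond_distr P (fun w => (Yv anc i w, (Zv f m w, Omall anc m w))) W)
           (fun p : YT Xs * ({ffun 'I_n -> option (AX As)} * {ffun 'I_n -> OT Xs}) =>
              cond_distr P (fun w => (Zv f m w, Omall anc m w)) W p.2
              * cond_kernel P (Yv anc i) (Omv anc m i) (p.2.2 i) p.1))
        <= Num.sqrt delta].
Proof.
move=> k_gt0 mu_distr _ m_ge1 m_lt_n P W PW_gt0 delta.
split; apply: avg_le_sqrt_delta => // [i|]; try exact: tv_ge0.
- apply: le_trans _ (sum_relent_XYOm_le anc k_gt0 mu_distr PW_gt0); apply: ler_sum => i _.
  exact: (tv_cond_sqr_le_relent (P_ge0 mu_distr) (P_sum1 n k_gt0 mu_distr) PW_gt0).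
- apply: le_trans _ (sum_relent_XY_kernel_le anc k_gt0 mu_distr PW_gt0); apply: ler_sum => i.
  exact: tv_XY_kernel_sqr_le.
- apply: le_trans _ (sum_relent_YOm_kernel_le anc k_gt0 mu_distr PW_gt0); apply: ler_sum => i _.
  exact: tv_YOm_kernel_sqr_le.
Qed.
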